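(* Let $n\ge 1$, $K\ge 1$ be integers and $p_n\in[0,1]$. Let $(\mathcal{G}(n),\mathcal{A}(n))$ be the output of the Threshold exploration algorithm and let $(G(n,p_n),\mathcal{I}(n))$ be the graph and final active set of the Threshold model (both described in the context). Then the joint distribution of $(\mathcal{G}(n),\mathcal{A}(n))$ is identical to the joint distribution of $(G(n,p_n),\mathcal{I}(n))$.
   Context: $G(n,p_n)$ is the Erdős–Rényi random graph on vertex set $[n]=\{1,\dots,n\}$, each of the pairs $\{u,v\}$, $u\ne v$, being an edge independently with probability $p_n$. For a graph $G$ and vertex set $U$, $G_U$ is the induced subgraph and $d_{\max}$ the maximum degree. Threshold model: given a realization of $G(n,p_n)$, set $\mathcal{I}(0)=\varnothing$. At each step $t+1$ ($0\le t\le n-1$), a vertex $v$ is chosen uniformly at random among vertices not selected before (independently of the graph); if $d_{\max}(G_{\mathcal{I}(t)\cup\{v\}})<K$ set $\mathcal{I}(t+1)=\mathcal{I}(t)\cup\{v\}$, otherwise $\mathcal{I}(t+1)=\mathcal{I}(t)$. $\mathcal{I}(n)$ is the final (maximal greedy $K$-independent) set. Threshold exploration algorithm: maintain sets $\mathcal{A}_0(t),\dots,\mathcal{A}_{K-1}(t)$ (active vertices with exactly $k$ active neighbours), $\mathcal{B}(t)$ (frozen vertices) and $\mathcal{U}(t)$ (unexplored vertices), initially $\mathcal{A}_k(0)=\mathcal{B}(0)=\varnothing$, $\mathcal{U}(0)=[n]$; let $\mathcal{A}(t)=\bigcup_k\mathcal{A}_k(t)$. At step $t+1$, select $v\in\mathcal{U}(t)$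 uniformly at random, remove it from $\mathcal{U}$, and for each $u\in\mathcal{A}(t)\cup\mathcal{B}(t)$ independently add the edge $\{v,u\}$ with probability $p_n$. Let $v_1,\dots,v_r$ ($r\ge0$) be the vertices of $\mathcal{A}(t)$ joined to $v$, with $v_i\in\mathcal{A}_{k_i}(t)$. If $r<K$ and no $v_i$ lies in $\mathcal{A}_{K-1}(t)$, then $v$ is put into $\mathcal{A}_r$ and each $v_i$ is moved from $\mathcal{A}_{k_i}$ to $\mathcal{A}_{k_i+1}$; otherwise $v$ is put into $\mathcal{B}$ and the sets $\mathcal{A}_k$ are unchanged. After $n$ steps the algorithm outputs $\mathcal{A}(n)$ and the graph $\mathcal{G}(n)$ on $[n]$ formed by all edges added. *)

From HB Require Import structures.
From mathcomp Require Import all_boot all_order all_algebra.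
Set Implicit Arguments. Unset Strict Implicit. Unset Printing Implicit Defensive.
Import Order.TTheory GRing.Theory Num.Theory.
Local Open Scope ring_scope.

(* Vertices are 'I_n (representing [n]); a graph is a set of edges, each edge
   a 2-element subset of 'I_n. *)
Definition graph (n : nat) := {set {set 'I_n}}.

Definition pairs (n : nat) : {set {set 'I_n}} :=
  [set e : {set 'I_n} | #|e| == 2%N].

Definition ideg n (G : graph n) (U : {set 'I_n}) (x : 'I_n) : nat :=
  #|[set y in U | [set x; y] \in G]|.

(* maximum degree of the induced subgraph G_U (0 for the empty graph) *)
Definition dmax n (G : graph n) (U : {set 'I_n}) : nat :=
  (\max_(x in U) ideg G U x)%N.

Definition gnp_prob (R : realFieldType) n (p : R) (G : graph n) : R :=
  if G \subset pairs n
  then p ^+ #|G| * (1 - p) ^+ (#|pairs n| - #|G|)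
  else 0.

Definition outcome (n : nat) := (graph n * {set 'I_n})%type.

(* thr_prob m G I U o : probability that, starting with current active set I
   and set of not-yet-selected vertices U, after m further steps the pair
   (graph, final active set) equals o. *)
Fixpoint thr_prob (R : realFieldType) n (K : nat) (m : nat) (G : graph n)
    (I U : {set 'I_n}) (o : outcome n) : R :=
  match m with
  | 0%N => ((G, I) == o)%:R
  | m'.+1 =>
      \sum_(v in U) (#|U|%:R)^-1 *
        thr_prob R K m' G
          (if (dmax G (v |: I) < K)%N then v |: I else I) (U :\ v) o
  end.

Definition thr_dist (R : realFieldType) n (K : nat) (p : R) (o : outcome n) : R :=
  \sum_(G : graph n) gnp_prob p G * thr_prob R K n G set0 setT o.

(* State: active set A, level function lvl (u \in A_k iff u \in A and
   lvl u = k), frozen set B, unexplored set U, and the edges added so far. *)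
Record xstate (n : nat) := XState {
  xA : {set 'I_n};
  xlvl : {ffun 'I_n -> nat};
  xB : {set 'I_n};
  xU : {set 'I_n};
  xE : graph n }.

Definition xinit (n : nat) : xstate n :=
  XState set0 [ffun => 0%N] set0 setT set0.

(* One step, given the selected vertex v and the set S of vertices of
   A(t) \cup B(t) to which v gets joined. *)
Definition xstep n (K : nat) (s : xstate n) (v : 'I_n) (S : {set 'I_n}) :
    xstate n :=
  let Vs := S :&: xA s in
  let r := #|Vs| in
  let E' := xE s :|: [set [set v; u] | u in S] in
  let U' := xU s :\ v in
  if (r < K)%N && [forall u in Vs, xlvl s u != K.-1]
  then XState (v |: xA s)
              [ffun u => if u \in Vs then (xlvl s u).+1
                         else if u == v then r else xlvl s u]
              (xB s) U' E'
  else XState (xA s) (xlvl s) (v |: xB s) U' E'.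

(* xprob m s o : probability that after m further steps from state s,
   the output (G(t), A(t)) equals o.  v uniform in U(t); each u in
   A(t) \cup B(t) independently joined to v with probability p. *)
Fixpoint xprob (R : realFieldType) n (K : nat) (p : R) (m : nat)
    (s : xstate n) (o : outcome n) : R :=
  match m with
  | 0%N => ((xE s, xA s) == o)%:R
  | m'.+1 =>
      \sum_(v in xU s) (#|xU s|%:R)^-1 *
        \sum_(S in powerset (xA s :|: xB s))
          p ^+ #|S| * (1 - p) ^+ (#|xA s :|: xB s| - #|S|) *
          xprob K p m' (xstep K s v S) o
  end.

Definition expl_dist (R : realFieldType) n (K : nat) (p : R) (o : outcome n) : R :=
  xprob K p n (xinit n) o.

From HB Require Import structures.
From mathcomp Require Import all_boot all_order all_algebra.
From mathcomp Require Import zify ring.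
Set Implicit Arguments. Unset Strict Implicit. Unset Printing Implicit Defensive.
Import Order.TTheory GRing.Theory Num.Theory.
Local Open Scope ring_scope.

(* Principle of deferred decisions.  When the exploration has still to visit
   the vertices U, it has revealed exactly the pairs inside ~: U, and the pairs
   meeting U are still independent Bernoulli(p).  Selecting v in U reveals the
   star between v and the explored vertices; the pairs meeting U :\ v remain
   untouched.  By induction on #|U|, the exploration from any consistent state
   therefore has the law of the threshold model run on the revealed edges plus
   an independent p-random set of unrevealed pairs.  Its acceptance test agrees
   with the threshold test dmax < K because the level of an active vertex is
   its number of active neighbours, and pairs meeting U :\ v never join two
   vertices of v |: A. *)

Lemma set2C (T : finType) (a b : T) : [set a; b] = [set b; a].
Proof. exact: setUC. Qed.

Lemma set2_injr (T : finType) (v : T) (D : {set T}) : v \notin D ->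
  {in D &, injective (fun u => [set v; u])}.
Proof.
move=> vD a b aD bD /= eab.
have : a \in [set v; b] by rewrite -eab !inE eqxx orbT.
by case/set2P => // av; rewrite -av aD in vD.
Qed.

Lemma exists_set2 (T : finType) (a b : T) (P : pred T) :
  [exists x in [set a; b], P x] = P a || P b.
Proof.
apply/existsP/orP => [[x /andP [/set2P [] -> ->]] | [Pa | Pb]];
  [by left | by right | |].
  by exists a; rewrite !inE eqxx Pa.
by exists b; rewrite !inE eqxx orbT Pb.
Qed.

Definition bern_wt (R : comPzRingType) (p : R) (T : finType) (X H : {set T}) : R :=
  p ^+ #|H| * (1 - p) ^+ (#|X| - #|H|).

Section PowersetSums.
Variables (R : nmodType) (T : finType).
Implicit Types (X Y : {set T}) (F : {set T} -> R).

Lemma sum_powersetU X Y F : [disjoint X & Y] ->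
  \sum_(H in powerset (X :|: Y)) F H =
  \sum_(H1 in powerset X) \sum_(H2 in powerset Y) F (H1 :|: H2).
Proof.
move=> dXY; rewrite pair_big /=.
rewrite (reindex_onto (fun q : {set T} * {set T} => q.1 :|: q.2)
   (fun H => (H :&: X, H :&: Y))) /=; last first.
  by move=> H; rewrite powersetE => sH; rewrite -setIUr; apply/setIidPl.
apply: eq_big => [[H1 H2] | [H1 H2] /andP [_ /eqP [<- <-]] //] /=.
rewrite !powersetE; apply/andP/andP => [[_ /eqP [<- <-]] | [sH1 sH2]].
  by rewrite !subsetIr.
split; first by rewrite setUSS.
rewrite !setIUl (setIidPl sH1) (setIidPl sH2).
have [/disjoint_setI0 -> /disjoint_setI0 ->] :
    [disjoint H2 & X] /\ [disjoint H1 & Y].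
  by split; [apply: disjointWl sH2 _; rewrite disjoint_sym | apply: disjointWl sH1 _].
by rewrite setU0 set0U.
Qed.

Lemma sum_powerset_imset (I : finType) (f : I -> T) (C : {set I}) F :
  {in C &, injective f} ->
  \sum_(H in powerset (f @: C)) F H = \sum_(S in powerset C) F (f @: S).
Proof.
move=> finj.
have -> : powerset (f @: C) = [set f @: S | S : {set I} in powerset C].
  apply/setP => H; rewrite powersetE; apply/idP/imsetP => [sH | [S]].
    exists (C :&: f @^-1: H); first by rewrite powersetE subsetIl.
    apply/setP => y; apply/idP/imsetP => [yH | [x]].
      have /imsetP [x xC fx] := subsetP sH y yH.
      by exists x => //; rewrite !inE xC -fx.
    by rewrite !inE => /andP [_ fxH] ->.
  by rewrite powersetE => sS ->; apply: imsetS.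
rewrite big_imset //= => S1 S2; rewrite !inE => sS1 sS2 eS.
apply/setP => x; apply/idP/idP => xS.
  have /imsetP [y yS2 fxy] : f x \in f @: S2 by rewrite -eS imset_f.
  by rewrite (finj _ _ (subsetP sS1 x xS) (subsetP sS2 y yS2) fxy).
have /imsetP [y yS1 fxy] : f x \in f @: S1 by rewrite eS imset_f.
by rewrite (finj _ _ (subsetP sS2 x xS) (subsetP sS1 y yS1) fxy).
Qed.

End PowersetSums.

Section BernoulliWeights.
Variables (R : comPzRingType) (p : R).

Lemma bern_wtU (T : finType) (X Y H1 H2 : {set T}) :
  [disjoint X & Y] -> H1 \subset X -> H2 \subset Y ->
  bern_wt p (X :|: Y) (H1 :|: H2) = bern_wt p X H1 * bern_wt p Y H2.
Proof.
move=> dXY sH1 sH2; have dH : [disjoint H1 & H2] by apply: disjointW dXY.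
rewrite /bern_wt !cardsU (disjoint_setI0 dXY) (disjoint_setI0 dH) !cards0 !subn0.
have l1 := subset_leq_card sH1; have l2 := subset_leq_card sH2.
rewrite (_ : (_ + _ - _ = #|X| - #|H1| + (#|Y| - #|H2|))%N); last by lia.
by rewrite !exprD; ring.
Qed.

Lemma bern_wt_imset (I T : finType) (f : I -> T) (C S : {set I}) :
  {in C &, injective f} -> S \subset C -> bern_wt p (f @: C) (f @: S) = bern_wt p C S.
Proof.
move=> finj sS.
by rewrite /bern_wt (card_in_imset finj) (card_in_imset (sub_in2 (subsetP sS) finj)).
Qed.

Lemma sum_bern_imsetU (I T : finType) (f : I -> T) (C : {set I}) (Y : {set T})
    (F : {set T} -> R) :
  {in C &, injective f} -> [disjoint f @: C & Y] ->
  \sum_(H in powerset (f @: C :|: Y)) bern_wt p (f @: C :|: Y) H * F H =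
  \sum_(S in powerset C) bern_wt p C S *
    \sum_(H in powerset Y) bern_wt p Y H * F (f @: S :|: H).
Proof.
move=> finj dCY; rewrite sum_powersetU // sum_powerset_imset //.
apply: eq_bigr => S; rewrite powersetE big_distrr => sS; apply: eq_bigr => H.
rewrite powersetE => sH; rewrite bern_wtU ?imsetS // bern_wt_imset //=.
by rewrite mulrA.
Qed.

End BernoulliWeights.

Lemma ideg_setU1 n (G : graph n) (X : {set 'I_n}) v w : v \notin X ->
  ideg G (v |: X) w = (ideg G X w + ([set w; v] \in G))%N.
Proof.
move=> vX; rewrite /ideg; case: (boolP ([set w; v] \in G)) => hv.
  rewrite (_ : [set y in v |: X | _] = v |: [set y in X | [set w; y] \in G]).
    by rewrite cardsU1 inE (negbTE vX) addn1.
  by apply/setP => y; rewrite !inE; case: eqP => [->|].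
rewrite addn0; apply: eq_card => y; rewrite !inE.
by case: eqP => [->|]; rewrite ?(negbTE hv) ?(negbTE vX).
Qed.

Lemma eq_in_ideg n (G G' : graph n) (X : {set 'I_n}) w :
  {in X, forall y, ([set w; y] \in G) = ([set w; y] \in G')} ->
  ideg G X w = ideg G' X w.
Proof.
by move=> eqG; apply: eq_card => y; rewrite !inE; case: (boolP (y \in X)) => // /eqG.
Qed.

Lemma dmax_lt n (G : graph n) (X : {set 'I_n}) K : (0 < K)%N ->
  (dmax G X < K)%N = [forall x in X, ideg G X x < K]%N.
Proof.
case: K => // K _; rewrite /dmax ltnS.
by apply/bigmax_leqP/forall_inP => h x /h.
Qed.

Lemma ideg_le_dmax n (G : graph n) (X : {set 'I_n}) x :
  x \in X -> (ideg G X x <= dmax G X)%N.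
Proof. by move=> xX; rewrite /dmax (bigD1 x) //= leq_maxl. Qed.

Definition unrevealed n (U : {set 'I_n}) : graph n :=
  [set e in pairs n | [exists x in e, x \in U]].

Lemma unrevealed_setT n : unrevealed [set: 'I_n] = pairs n.
Proof.
apply/setP => e; rewrite !inE andb_idr // => /cards2P [a [b [_ ->]]].
by apply/existsP; exists a; rewrite !inE eqxx.
Qed.

Lemma unrevealed_set0 n : unrevealed (set0 : {set 'I_n}) = set0.
Proof.
apply/setP => e; rewrite !inE andbC; case: existsP => // [[x]].
by rewrite inE andbF.
Qed.

Section Unrevealed.
Variables (n : nat) (U : {set 'I_n}) (v : 'I_n).
Hypothesis vU : v \in U.

Lemma unrevealedD1 :
  unrevealed U = [set [set v; u] | u in ~: U] :|: unrevealed (U :\ v).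
Proof.
apply/setP => e; rewrite !inE; apply/idP/idP.
- case/andP => /cards2P [a [b [anb ->]]].
  rewrite !exists_set2 !inE cards2 anb /=.
  have [av | av] := eqVneq a v.
    subst a; rewrite /= (eq_sym b v) anb => _.
    case: (boolP (b \in U)) => bU; rewrite ?orbT //.
    by apply/orP; left; apply/imsetP; exists b; rewrite ?inE.
  have [bv | bv] := eqVneq b v.
    subst b; rewrite /= orbF => _.
    case: (boolP (a \in U)) => aU; rewrite ?orbT //.
    by apply/orP; left; apply/imsetP; exists a; rewrite ?inE // set2C.
  by case/orP => ->; rewrite ?orbT.
- case/orP => [/imsetP [u uU ->] | /andP [-> /existsP [x /andP [xe]]]].
    have uv : u != v by apply: contraTneq uU => ->; rewrite inE vU.
    by rewrite cards2 (eq_sym v u) uv exists_set2 vU.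
  by rewrite inE => /andP [_ xU]; apply/existsP; exists x; rewrite xe.
Qed.

Lemma disjoint_unrevealedD1 :
  [disjoint [set [set v; u] | u in ~: U] & unrevealed (U :\ v)].
Proof.
rewrite -setI_eq0; apply/eqP/setP => e; rewrite !inE.
apply/negP => /andP [/imsetP [u uU ->] /andP [_]]; rewrite inE in uU.
by rewrite exists_set2 !inE eqxx (negbTE uU) !andbF.
Qed.

End Unrevealed.

Section Reveal.
Variables (n : nat) (E H : graph n) (U S : {set 'I_n}) (v : 'I_n).
Hypotheses (sE : E \subset powerset (~: U)) (vU : v \in U) (sS : S \subset ~: U)
  (sH : H \subset unrevealed (U :\ v)).

Let G := E :|: [set [set v; u] | u in S] :|: H.

Let notin_H w y : w \notin U :\ v -> y \notin U :\ v -> [set w; y] \notin H.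
Proof.
move=> wU yU; apply/negP => /(subsetP sH).
by rewrite inE exists_set2 (negbTE wU) (negbTE yU) andbF.
Qed.

Let notin_E y : [set v; y] \notin E.
Proof.
apply/negP => /(subsetP sE); rewrite powersetE => /subsetP /(_ v).
by rewrite !inE vU eqxx => /(_ isT).
Qed.

Let notin_D1 x : x \notin U -> x \notin U :\ v.
Proof. by rewrite inE negb_and => ->; rewrite orbT. Qed.

Let set2v_inj : {in ~: U &, injective (fun u => [set v; u])}.
Proof. by apply: set2_injr; rewrite inE vU. Qed.

Let mem_reveal_out w y : w \notin U -> y \notin U ->
  ([set w; y] \in G) = ([set w; y] \in E).
Proof.
move=> wU yU; rewrite /G !inE (negbTE (notin_H (notin_D1 wU) (notin_D1 yU))) orbF.
case: imsetP => [[u _ ewy] | _]; last by rewrite orbF.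
have /set2P [vw | vy] : v \in [set w; y] by rewrite ewy set21.
  by rewrite -vw vU in wU.
by rewrite -vy vU in yU.
Qed.

Let mem_reveal_v y : y \notin U -> ([set v; y] \in G) = (y \in S).
Proof.
have vD1 : v \notin U :\ v by rewrite !inE eqxx.
move=> yU; rewrite /G !inE (negbTE (notin_E y)) (negbTE (notin_H vD1 (notin_D1 yU))).
rewrite orbF; apply/imsetP/idP => [[u uS /set2v_inj] | yS]; last by exists y.
have yC : y \in ~: U by rewrite inE.
by move=> /(_ yC (subsetP sS u uS)) ->.
Qed.

Let reveal_loop_notin : [set v; v] \notin G.
Proof.
have vD1 : v \notin U :\ v by rewrite !inE eqxx.
rewrite /G !inE (negbTE (notin_E v)) (negbTE (notin_H vD1 vD1)) orbF.
apply/imsetP => [[u uS evu]].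
have : u \in [set v; v] by rewrite evu set22.
rewrite setUid inE => /eqP uv.
by have := subsetP sS u uS; rewrite uv inE vU.
Qed.

Lemma ideg_reveal_out (X : {set 'I_n}) w :
  X \subset ~: U -> w \notin U -> ideg G X w = ideg E X w.
Proof.
move=> sX wU; apply: eq_in_ideg => y /(subsetP sX); rewrite inE; exact: mem_reveal_out.
Qed.

Variable A : {set 'I_n}.
Hypothesis sA : A \subset ~: U.

Let vA : v \notin A.
Proof. by apply: contraTN vU => /(subsetP sA); rewrite inE. Qed.

Lemma ideg_reveal_v : ideg G (v |: A) v = #|S :&: A|.
Proof.
rewrite ideg_setU1 // (negbTE reveal_loop_notin) addn0; apply: eq_card => y.
rewrite in_setI in_set; case: (boolP (y \in A)) => [yA | _]; rewrite ?andbT ?andbF //.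
by apply: mem_reveal_v; have := subsetP sA y yA; rewrite inE.
Qed.

Lemma ideg_reveal_w w : w \in A -> ideg G (v |: A) w = (ideg E A w + (w \in S))%N.
Proof.
move=> wA; have wU : w \notin U by have := subsetP sA w wA; rewrite inE.
by rewrite ideg_setU1 // ideg_reveal_out // set2C mem_reveal_v.
Qed.

(* v gets degree #|S :&: A|, and an active u gains a neighbour iff u \in S,
   which breaks the bound iff its degree was K.-1. *)
Lemma dmax_reveal_lt (lvl : 'I_n -> nat) K : (0 < K)%N ->
  {in A, lvl =1 ideg E A} -> (dmax E A < K)%N ->
  (dmax G (v |: A) < K)%N =
  (#|S :&: A| < K)%N && [forall u in S :&: A, lvl u != K.-1].
Proof.
move=> K0 lvlE dA; rewrite dmax_lt //.
apply/forall_inP/andP => [h | [hS /forall_inP hl] x /setU1P [-> | xA]].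
- split; first by have := h v (setU11 _ _); rewrite ideg_reveal_v.
  apply/forall_inP => u /setIP [uS uA].
  by have := h u (setU1r _ uA); rewrite ideg_reveal_w // uS lvlE //; lia.
- by rewrite ideg_reveal_v.
- have := ideg_le_dmax E xA; rewrite ideg_reveal_w //.
  case: (boolP (x \in S)) => xS; last by rewrite addn0 => /leq_ltn_trans; apply.
  by have := hl x; rewrite inE xS xA lvlE // => /(_ isT); lia.
Qed.

End Reveal.

Definition xconsistent n K (s : xstate n) : Prop :=
  [/\ xA s :|: xB s = ~: xU s, xE s \subset powerset (~: xU s),
      {in xA s, xlvl s =1 ideg (xE s) (xA s)} & (dmax (xE s) (xA s) < K)%N].

Lemma xinit_consistent n K : (0 < K)%N -> xconsistent K (xinit n).
Proof.
move=> K0; split; rewrite /= ?setU0 ?setCT ?sub0set //; first by move=> x; rewrite inE.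
by rewrite /dmax big_set0.
Qed.

Section ExplorationStep.
Variables (n K : nat) (s : xstate n) (v : 'I_n) (S : {set 'I_n}).
Hypotheses (K0 : (0 < K)%N) (hs : xconsistent K s) (vU : v \in xU s)
  (sS : S \subset xA s :|: xB s).

Local Notation E' := (xE s :|: [set [set v; u] | u in S]).

Let hAB : xA s :|: xB s = ~: xU s. Proof. by case: hs. Qed.
Let sE : xE s \subset powerset (~: xU s). Proof. by case: hs. Qed.
Let lvlE : {in xA s, xlvl s =1 ideg (xE s) (xA s)}. Proof. by case: hs. Qed.
Let dA : (dmax (xE s) (xA s) < K)%N. Proof. by case: hs. Qed.
Let sAU : xA s \subset ~: xU s. Proof. by rewrite -hAB subsetUl. Qed.
Let sSU : S \subset ~: xU s. Proof. by rewrite -hAB. Qed.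
Let sH0 : set0 \subset unrevealed (xU s :\ v). Proof. exact: sub0set. Qed.
Let E'_setU0 : E' = E' :|: set0. Proof. by rewrite setU0. Qed.

Lemma xstepE :
  [/\ xE (xstep K s v S) = E', xU (xstep K s v S) = xU s :\ v &
      xA (xstep K s v S) =
        if (dmax E' (v |: xA s) < K)%N then v |: xA s else xA s].
Proof.
rewrite E'_setU0 (dmax_reveal_lt sE vU sSU sH0 sAU K0 lvlE dA).
by rewrite /xstep; case: ifP.
Qed.

Lemma dmax_reveal_unrevealed (H : graph n) : H \subset unrevealed (xU s :\ v) ->
  (dmax (E' :|: H) (v |: xA s) < K)%N = (dmax E' (v |: xA s) < K)%N.
Proof.
by move=> sH; rewrite [in RHS]E'_setU0 !(dmax_reveal_lt sE vU sSU _ sAU K0 lvlE dA).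
Qed.

Let vA : v \notin xA s.
Proof. by apply: contraTN vU => /(subsetP sAU); rewrite inE. Qed.

Let setC_D1 : ~: (xU s :\ v) = v |: ~: xU s.
Proof. by rewrite setCD setUC. Qed.

Let sE' : E' \subset powerset (~: (xU s :\ v)).
Proof.
rewrite setC_D1; apply/subsetP => e; rewrite powersetE inE.
case/orP => [/(subsetP sE) | /imsetP [u /(subsetP sSU) uU ->]].
  by rewrite powersetE => /subset_trans; apply; apply: subsetU1.
by rewrite subUset sub1set setU11 sub1set setU1r.
Qed.

Let ideg_E'_active u : u \in xA s -> ideg E' (xA s) u = ideg (xE s) (xA s) u.
Proof.
move=> uA; have := subsetP sAU u uA; rewrite inE => uU.
by rewrite E'_setU0 (ideg_reveal_out _ _ vU sH0 sAU).
Qed.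

Lemma xconsistent_step : xconsistent K (xstep K s v S).
Proof.
have acc := dmax_reveal_lt sE vU sSU sH0 sAU K0 lvlE dA; rewrite -E'_setU0 in acc.
rewrite /xstep -acc; case: ifP => hd; split => //=.
- by rewrite setC_D1 -hAB setUA.
- move=> u /setU1P [-> | uA]; rewrite ffunE E'_setU0.
    by rewrite inE (negbTE vA) andbF eqxx (ideg_reveal_v sE vU sSU sH0 sAU).
  rewrite (ideg_reveal_w sE vU sSU sH0 sAU uA) inE uA andbT -lvlE //.
  have -> : (u == v) = false by apply: contraTF uA => /eqP ->.
  by case: (u \in S); rewrite ?addn1 ?addn0.
- by rewrite setC_D1 -hAB setUCA.
- by move=> u uA; rewrite ideg_E'_active // lvlE.
- rewrite /dmax (eq_bigr _ ideg_E'_active); exact: dA.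
Qed.

End ExplorationStep.

Lemma xprob_deferred (R : realFieldType) n K (p : R) (o : outcome n) m
    (s : xstate n) :
  (0 < K)%N -> xconsistent K s -> #|xU s| = m ->
  xprob K p m s o =
  \sum_(H in powerset (unrevealed (xU s)))
    bern_wt p (unrevealed (xU s)) H * thr_prob R K m (xE s :|: H) (xA s) (xU s) o.
Proof.
move=> K0; elim: m s => [|m IH] s hs cU.
  rewrite (cards0_eq cU) unrevealed_set0 powerset0 big_set1 setU0.
  by rewrite /bern_wt cards0 subnn !expr0 !mul1r.
have [hAB _ _ _] := hs; rewrite /=.
under [RHS]eq_bigr => H _ do rewrite big_distrr /=.
rewrite exchange_big /=; apply: eq_bigr => v vU.
under [RHS]eq_bigr => H _ do rewrite mulrCA.
rewrite -big_distrr /=; congr (_ * _).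
have vC : v \notin ~: xU s by rewrite inE vU.
have injv := set2_injr vC.
rewrite (unrevealedD1 vU) sum_bern_imsetU ?disjoint_unrevealedD1 //.
rewrite -hAB; apply: eq_bigr => S; rewrite powersetE => sS; congr (_ * _).
have cU' : #|xU (xstep K s v S)| = m.
  by have [_ -> _] := xstepE K0 hs vU sS; move: cU; rewrite (cardsD1 v) vU => -[].
rewrite (IH _ (xconsistent_step K0 hs vU sS) cU').
have [-> -> ->] := xstepE K0 hs vU sS; apply: eq_bigr => H; rewrite powersetE => sH.
by rewrite setUA (dmax_reveal_unrevealed K0 hs vU sS sH).
Qed.

Theorem proposition1 (R : realFieldType) (n K : nat) (p : R) :
  (1 <= n)%N -> (1 <= K)%N -> 0 <= p -> p <= 1 ->
  forall o : outcome n, expl_dist K p o = thr_dist K p o.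
Proof.
move=> _ K0 _ _ o.
rewrite /expl_dist (xprob_deferred p o K0 (xinit_consistent n K0)) ?cardsT ?card_ord //.
rewrite /= unrevealed_setT /thr_dist [RHS](bigID (mem (powerset (pairs n)))) /=.
rewrite [X in _ = _ + X]big1 ?addr0 => [|G]; last first.
  by rewrite powersetE /gnp_prob => /negbTE ->; rewrite mul0r.
apply: eq_bigr => G; rewrite powersetE => sG.
by rewrite /gnp_prob sG set0U.
Qed.
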